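(* Let $\Delta>1$ be a constant such that every $\Delta$-extensible map $g\colon W\to V$ satisfies $\sup_{x,y\in W}\frac{Dg(x)}{Dg(y)}\le2$. Let $W,V$ be open intervals and $g\colon W\to V$ a $C^2$ surjective diffeomorphism with $|Dg|^{-1/2}$ convex, which extends to a $C^2$ surjective diffeomorphism $g\colon\hat W\to\hat V$ with $|Dg|^{-1/2}$ convex, where $\hat W,\hat V$ are intervals and $\hat W$ compactly contains $W$. Suppose that each connected component of $\hat V\setminus V$ has length at least $10(1+\Delta)|V|$ and that $|V|>|\hat W|$. Then $|Dg|>5$ on $W$.
   Context: For $\delta>0$, a $C^2$ surjective diffeomorphism $g\colon W\to V$ between open intervals with $|Dg|^{-1/2}$ convex is called $\delta$-extensible if it extends to a $C^2$ surjective diffeomorphism $g\colon\hat W\to\hat V$ with $|Dg|^{-1/2}$ convex, where $\hat W,\hat V$ are intervals, $\hat W$ compactly contains $W$, and both connected components of $\hat V\setminus V$ have length at least $\delta|V|$. $|\cdot|$ denotes length. *)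

From Stdlib Require Import Reals.
From Coquelicot Require Import Coquelicot.
Open Scope R_scope.

Definition open_int (a b : R) : R -> Prop := fun x => a < x /\ x < b.

Definition is_interval (I : R -> Prop) : Prop :=
  forall x y z, I x -> I z -> x <= y -> y <= z -> I y.

Definition ilen (I : R -> Prop) : Rbar := Rbar_minus (Lub_Rbar I) (Glb_Rbar I).

(* f' is the derivative of f within I at every point of I (one-sided at endpoints of I). *)
Definition deriv_within (I : R -> Prop) (f f' : R -> R) : Prop :=
  forall x, I x -> forall eps, 0 < eps -> exists delta, 0 < delta /\
    forall y, I y -> y <> x -> Rabs (y - x) < delta ->
      Rabs ((f y - f x) / (y - x) - f' x) < eps.

Definition cont_within (I : R -> Prop) (f : R -> R) : Prop :=
  forall x, I x -> forall eps, 0 < eps -> exists delta, 0 < delta /\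
    forall y, I y -> Rabs (y - x) < delta -> Rabs (f y - f x) < eps.

Definition C2_with (I : R -> Prop) (f Df : R -> R) : Prop :=
  deriv_within I f Df /\ exists D2f, deriv_within I Df D2f /\ cont_within I D2f.

Definition C2_diffeo (I J : R -> Prop) (f Df : R -> R) : Prop :=
  C2_with I f Df /\
  exists h Dh, C2_with J h Dh /\
    (forall x, I x -> J (f x) /\ h (f x) = x) /\
    (forall y, J y -> I (h y) /\ f (h y) = y).

Definition convex_on (I : R -> Prop) (phi : R -> R) : Prop :=
  forall x y t, I x -> I y -> 0 <= t -> t <= 1 ->
    phi (t * x + (1 - t) * y) <= t * phi x + (1 - t) * phi y.

Definition inv_sqrt_abs (Df : R -> R) : R -> R := fun x => / sqrt (Rabs (Df x)).

(* What compactly contains the open interval (a,b): its closure [a,b] lies in What. *)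
Definition compactly_contains_int (What : R -> Prop) (a b : R) : Prop :=
  forall x, a <= x -> x <= b -> What x.

(* Connected components of Vhat \ (c,d) (V = (c,d) is contained in Vhat). *)
Definition left_comp (Vhat : R -> Prop) (c : R) : R -> Prop := fun y => Vhat y /\ y <= c.
Definition right_comp (Vhat : R -> Prop) (d : R) : R -> Prop := fun y => Vhat y /\ d <= y.

Definition extensible (delta : R) (a b c d : R) (g Dg : R -> R) : Prop :=
  C2_diffeo (open_int a b) (open_int c d) g Dg /\
  convex_on (open_int a b) (inv_sqrt_abs Dg) /\
  exists What Vhat : R -> Prop,
    is_interval What /\ is_interval Vhat /\
    compactly_contains_int What a b /\
    C2_diffeo What Vhat g Dg /\
    convex_on What (inv_sqrt_abs Dg) /\
    Rbar_le (delta * (d - c)) (ilen (left_comp Vhat c)) /\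
    Rbar_le (delta * (d - c)) (ilen (right_comp Vhat d)).

(* Shrink the target to V' = (c - 9w/2, d + 9w/2), where w = |V|, so that |V'| = 10w.
   The long components of Vhat \ V still leave room Delta |V'| on both sides of V',
   hence g restricted to W' = g^-1(V') is Delta-extensible and Dg has distortion at
   most 2 on W'. By the mean value theorem |Dg| = 10w / |W'| > 10 somewhere on W',
   because W' lies in What, which is shorter than w. Since Dg has constant sign on
   W' (g is a diffeomorphism), |Dg| > 5 on W', which contains W. *)

From Stdlib Require Import Reals Lra.
From Coquelicot Require Import Coquelicot.
Open Scope R_scope.

Lemma ilen_ge_diff (S : R -> Prop) x y : S x -> S y -> Rbar_le (y - x) (ilen S).
Proof.
  intros Hx Hy. unfold ilen.
  destruct (Lub_Rbar_correct S) as [Hub _]. destruct (Glb_Rbar_correct S) as [Hlb _].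
  specialize (Hub y Hy). specialize (Hlb x Hx).
  destruct (Lub_Rbar S); destruct (Glb_Rbar S); simpl in *; try tauto; lra.
Qed.

Lemma ilen_ge_ex_span (S : R -> Prop) (r e : R) :
  Rbar_le r (ilen S) -> 0 < e -> exists x y, S x /\ S y /\ r - e < y - x.
Proof.
  intros Hr He. apply Classical_Prop.NNPP. intro Hno.
  assert (Hspan : forall x y, S x -> S y -> y <= x + (r - e)).
  { intros x y Hx Hy. apply Rnot_lt_le. intro Hlt.
    apply Hno. exists x, y. repeat split; auto; lra. }
  unfold ilen in Hr.
  destruct (Lub_Rbar_correct S) as [Hub Hlub]. destruct (Glb_Rbar_correct S) as [_ Hglb].
  destruct (Classical_Prop.classic (exists x, S x)) as [[x0 Hx0] | Hempty].
  - assert (Hsup : forall x, S x -> Rbar_le (Lub_Rbar S) (x + (r - e)))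
      by (intros x Hx; apply Hlub; intros y Hy; apply Hspan; auto).
    pose proof (Hub x0 Hx0) as Hx0ub. pose proof (Hsup x0 Hx0) as Hx0sup.
    destruct (Lub_Rbar S) as [l| |]; simpl in Hx0ub, Hx0sup; try tauto.
    assert (Hinf : Rbar_le (l - (r - e)) (Glb_Rbar S)).
    { apply Hglb. intros x Hx. specialize (Hsup x Hx). simpl in *. lra. }
    destruct (Glb_Rbar S); simpl in *; try tauto; lra.
  - assert (Hsup : Rbar_le (Lub_Rbar S) m_infty)
      by (apply Hlub; intros x Hx; exfalso; eauto).
    assert (Hinf : Rbar_le p_infty (Glb_Rbar S))
      by (apply Hglb; intros x Hx; exfalso; eauto).
    destruct (Lub_Rbar S); destruct (Glb_Rbar S); simpl in *; tauto.
Qed.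

Lemma left_comp_far_point (V : R -> Prop) (c r e : R) :
  Rbar_le r (ilen (left_comp V c)) -> 0 < e -> exists z, V z /\ z < c - r + e.
Proof.
  intros Hr He. destruct (ilen_ge_ex_span _ r e Hr He) as [z [y [[Vz _] [[_ Hy] Hspan]]]].
  exists z. split; [exact Vz | lra].
Qed.

Lemma right_comp_far_point (V : R -> Prop) (d r e : R) :
  Rbar_le r (ilen (right_comp V d)) -> 0 < e -> exists z, V z /\ d + r - e < z.
Proof.
  intros Hr He. destruct (ilen_ge_ex_span _ r e Hr He) as [x [z [[_ Hx] [[Vz _] Hspan]]]].
  exists z. split; [exact Vz | lra].
Qed.

Lemma is_interval_segment (J : R -> Prop) a b z :
  is_interval J -> J a -> J b -> Rmin a b <= z <= Rmax a b -> J z.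
Proof.
  intros HJ Ja Jb. unfold Rmin, Rmax. destruct Rle_dec; intros Hz.
  - apply (HJ a z b); tauto.
  - apply (HJ b z a); auto; lra.
Qed.

Lemma open_int_is_interval a b : is_interval (open_int a b).
Proof. intros x y z [] [] ? ?. split; lra. Qed.

Lemma deriv_within_subset (I I' : R -> Prop) f Df :
  (forall x, I' x -> I x) -> deriv_within I f Df -> deriv_within I' f Df.
Proof.
  intros HI H x Hx eps He. destruct (H x (HI x Hx) eps He) as [delta [Hd Hd']].
  exists delta. auto.
Qed.

Lemma cont_within_subset (I I' : R -> Prop) f :
  (forall x, I' x -> I x) -> cont_within I f -> cont_within I' f.
Proof.
  intros HI H x Hx eps He. destruct (H x (HI x Hx) eps He) as [delta [Hd Hd']].
  exists delta. auto.
Qed.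

Lemma C2_with_subset (I I' : R -> Prop) f Df :
  (forall x, I' x -> I x) -> C2_with I f Df -> C2_with I' f Df.
Proof.
  intros HI [Hf [D2f [HDf Hc]]]. split.
  - exact (deriv_within_subset I I' f Df HI Hf).
  - exists D2f. split.
    + exact (deriv_within_subset I I' Df D2f HI HDf).
    + exact (cont_within_subset I I' D2f HI Hc).
Qed.

Lemma convex_on_subset (I I' : R -> Prop) phi :
  (forall x, I' x -> I x) -> convex_on I phi -> convex_on I' phi.
Proof. intros HI H x y t Hx Hy. apply H; auto. Qed.

Lemma deriv_within_cont (I : R -> Prop) f Df : deriv_within I f Df -> cont_within I f.
Proof.
  intros H x Hx eps He. destruct (H x Hx 1 Rlt_0_1) as [delta [Hd Hd']].
  set (K := Rabs (Df x) + 1).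
  assert (HK : 0 < K) by (unfold K; pose proof (Rabs_pos (Df x)); lra).
  exists (Rmin delta (eps / K)). split.
  { apply Rmin_pos; auto. apply Rdiv_lt_0_compat; auto. }
  intros y Hy Hyx.
  destruct (Req_dec y x) as [-> | Hne]. { rewrite Rminus_diag, Rabs_R0. auto. }
  specialize (Hd' y Hy Hne (Rlt_le_trans _ _ _ Hyx (Rmin_l _ _))).
  assert (Hq : Rabs ((f y - f x) / (y - x)) <= K).
  { unfold K. pose proof (Rabs_triang_inv ((f y - f x) / (y - x)) (Df x)). lra. }
  assert (Hyx' : Rabs (y - x) < eps / K) by (eapply Rlt_le_trans; [apply Hyx | apply Rmin_r]).
  replace (f y - f x) with ((f y - f x) / (y - x) * (y - x)) by (field; lra).
  rewrite Rabs_mult.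
  apply Rle_lt_trans with (K * Rabs (y - x)).
  { apply Rmult_le_compat_r; auto. apply Rabs_pos. }
  apply Rlt_le_trans with (K * (eps / K)).
  - apply Rmult_lt_compat_l; auto.
  - right. field. lra.
Qed.

Lemma deriv_within_is_derive (I : R -> Prop) f Df al be x :
  deriv_within I f Df -> (forall t, al < t < be -> I t) -> al < x < be ->
  is_derive f x (Df x).
Proof.
  intros Hf HI Hx. apply is_derive_Reals. intros eps He.
  destruct (Hf x (HI x Hx) eps He) as [delta [Hd Hd']].
  assert (Hpos : 0 < Rmin delta (Rmin (x - al) (be - x))) by (repeat apply Rmin_pos; lra).
  exists (mkposreal _ Hpos). intros k Hk0 Hk. simpl in Hk.
  pose proof (Rmin_l delta (Rmin (x - al) (be - x))).
  pose proof (Rmin_r delta (Rmin (x - al) (be - x))).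
  pose proof (Rmin_l (x - al) (be - x)). pose proof (Rmin_r (x - al) (be - x)).
  assert (Ixk : I (x + k)) by (apply HI; revert Hk; unfold Rabs; destruct Rcase_abs; lra).
  specialize (Hd' (x + k) Ixk ltac:(lra) ltac:(replace (x + k - x) with k by ring; lra)).
  replace (x + k - x) with k in Hd' by ring. exact Hd'.
Qed.

Definition clamp (a b x : R) : R := Rmax a (Rmin b x).

Lemma clamp_in a b x : a <= b -> a <= clamp a b x <= b.
Proof. intros. unfold clamp, Rmax, Rmin. repeat destruct Rle_dec; lra. Qed.

Lemma clamp_id a b x : a <= x <= b -> clamp a b x = x.
Proof. intros. unfold clamp, Rmax, Rmin. repeat destruct Rle_dec; lra. Qed.

Lemma clamp_lipschitz a b x y : Rabs (clamp a b y - clamp a b x) <= Rabs (y - x).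
Proof.
  unfold clamp, Rmax, Rmin. repeat destruct Rle_dec; unfold Rabs; repeat destruct Rcase_abs; lra.
Qed.

(* Composing with the clamp to [Rmin a b, Rmax a b] extends f continuously to all of R. *)
Lemma cont_within_IVT (J : R -> Prop) f a b y :
  (forall x, Rmin a b <= x <= Rmax a b -> J x) -> cont_within J f ->
  Rmin (f a) (f b) <= y <= Rmax (f a) (f b) ->
  exists z, Rmin a b <= z <= Rmax a b /\ f z = y.
Proof.
  intros HJ Hc Hy.
  set (lo := Rmin a b). set (hi := Rmax a b).
  assert (Hlohi : lo <= hi) by apply Rmin_Rmax.
  set (F := fun x => f (clamp lo hi x)).
  assert (HF : continuity F).
  { intros x eps He.
    destruct (Hc (clamp lo hi x) (HJ _ (clamp_in lo hi x Hlohi)) eps He) as [delta [Hd Hd']].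
    exists delta. split; auto. intros t [_ Htx]. apply Hd'.
    - apply HJ, clamp_in; auto.
    - eapply Rle_lt_trans; [apply clamp_lipschitz | exact Htx]. }
  assert (Fa : F a = f a) by (unfold F; rewrite clamp_id; [auto | apply Rmin_Rmax_l]).
  assert (Fb : F b = f b) by (unfold F; rewrite clamp_id; [auto | apply Rmin_Rmax_r]).
  rewrite <- Fa, <- Fb in Hy.
  destruct (IVT_gen F a b y HF Hy) as [z [Hz Hfz]].
  exists z. split; auto. unfold F in Hfz. rewrite clamp_id in Hfz; auto.
Qed.

Lemma inj_cont_segment (J : R -> Prop) f a b s :
  is_interval J -> cont_within J f ->
  (forall u v, J u -> J v -> f u = f v -> u = v) ->
  J a -> J b -> J s -> Rmin (f a) (f b) <= f s <= Rmax (f a) (f b) ->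
  Rmin a b <= s <= Rmax a b.
Proof.
  intros HJ Hc Hinj Ja Jb Js Hfs.
  destruct (cont_within_IVT J f a b (f s)) as [z [Hz Hfz]]; auto.
  { intros x Hx. exact (is_interval_segment J a b x HJ Ja Jb Hx). }
  rewrite <- (Hinj z s); auto. exact (is_interval_segment J a b z HJ Ja Jb Hz).
Qed.

Lemma inj_cont_strict_between (J : R -> Prop) f u v x :
  is_interval J -> cont_within J f ->
  (forall s t, J s -> J t -> f s = f t -> s = t) ->
  J u -> J v -> Rmin u v < x < Rmax u v ->
  Rmin (f u) (f v) < f x < Rmax (f u) (f v).
Proof.
  intros HJ Hc Hinj Ju Jv Hx.
  assert (Jx : J x) by (apply (is_interval_segment J u v); auto; lra).
  assert (Hxu : f x <> f u).
  { intro E. apply Hinj in E; auto. revert Hx. unfold Rmin, Rmax. destruct Rle_dec; lra. }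
  assert (Hxv : f x <> f v).
  { intro E. apply Hinj in E; auto. revert Hx. unfold Rmin, Rmax. destruct Rle_dec; lra. }
  (* Were f x outside the segment between f u and f v, either f u would lie between f x
     and f v, or f v between f u and f x; inj_cont_segment rules out both. *)
  assert (Hu : ~ (Rmin (f x) (f v) <= f u <= Rmax (f x) (f v))).
  { intro Hfu. pose proof (inj_cont_segment J f x v u HJ Hc Hinj Jx Jv Ju Hfu) as Hseg.
    revert Hx Hseg. unfold Rmin, Rmax. repeat destruct Rle_dec; lra. }
  assert (Hv : ~ (Rmin (f u) (f x) <= f v <= Rmax (f u) (f x))).
  { intro Hfv. pose proof (inj_cont_segment J f u x v HJ Hc Hinj Ju Jx Jv Hfv) as Hseg.
    revert Hx Hseg. unfold Rmin, Rmax. repeat destruct Rle_dec; lra. }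
  revert Hu Hv. unfold Rmin, Rmax. repeat destruct Rle_dec; intros Hu Hv; split; try lra;
    exfalso; (apply Hu || apply Hv); lra.
Qed.

Lemma cont_neq0_same_sign (I : R -> Prop) f x y :
  is_interval I -> cont_within I f -> (forall t, I t -> f t <> 0) ->
  I x -> I y -> 0 < f x * f y.
Proof.
  intros HI Hc Hnz Ix Iy.
  destruct (Rlt_dec 0 (f x * f y)) as [| Hle]; auto. exfalso.
  destruct (cont_within_IVT I f x y 0) as [z [Hz Hfz]]; auto.
  - intros t Ht. exact (is_interval_segment I x y t HI Ix Iy Ht).
  - unfold Rmin, Rmax. destruct Rle_dec; nra.
  - exact (Hnz z (is_interval_segment I x y z HI Ix Iy Hz) Hfz).
Qed.

Lemma is_derive_left_inverse_neq0 (f h : R -> R) x df dh :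
  is_derive f x df -> is_derive h (f x) dh ->
  locally x (fun t => h (f t) = t) -> df <> 0.
Proof.
  intros Hf Hh Hloc Hdf.
  assert (Hid : is_derive (fun t => t) x (scal df dh))
    by exact (is_derive_ext_loc _ _ x _ Hloc (is_derive_comp h f x dh df Hh Hf)).
  apply is_derive_unique in Hid.
  rewrite (is_derive_unique _ _ _ (is_derive_id x)), Hdf in Hid.
  change (1 = 0 * dh) in Hid. lra.
Qed.

Lemma Rabs_le_of_ratio_le u v k : 0 < u * v -> u / v <= k -> Rabs u <= k * Rabs v.
Proof.
  intros Huv Hk.
  assert (Hv : v <> 0) by (intro E; rewrite E in Huv; lra).
  assert (Hpos : 0 < u / v).
  { replace (u / v) with (u * v / (v * v)) by (field; auto).
    apply Rdiv_lt_0_compat; nra. }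
  replace u with (u / v * v) at 1 by (field; auto).
  rewrite Rabs_mult, (Rabs_pos_eq (u / v)) by lra.
  apply Rmult_le_compat_r; [apply Rabs_pos | exact Hk].
Qed.

Section Restriction.

Variables (W V : R -> Prop) (g Dg h Dh : R -> R).
Hypotheses (HW : is_interval W) (HV : is_interval V)
  (Hg : C2_with W g Dg) (Hh : C2_with V h Dh)
  (Hhg : forall x, W x -> V (g x) /\ h (g x) = x)
  (Hgh : forall y, V y -> W (h y) /\ g (h y) = y).

Let g_injective u v : W u -> W v -> g u = g v -> u = v.
Proof. intros Wu Wv E. rewrite <- (proj2 (Hhg u Wu)), <- (proj2 (Hhg v Wv)), E. reflexivity. Qed.

Let h_injective u v : V u -> V v -> h u = h v -> u = v.
Proof. intros Vu Vv E. rewrite <- (proj2 (Hgh u Vu)), <- (proj2 (Hgh v Vv)), E. reflexivity. Qed.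

Let g_between u v x : W u -> W v -> Rmin u v < x < Rmax u v ->
  Rmin (g u) (g v) < g x < Rmax (g u) (g v).
Proof. apply inj_cont_strict_between; auto. exact (deriv_within_cont W g Dg (proj1 Hg)). Qed.

Let h_between u v y : V u -> V v -> Rmin u v < y < Rmax u v ->
  Rmin (h u) (h v) < h y < Rmax (h u) (h v).
Proof. apply inj_cont_strict_between; auto. exact (deriv_within_cont V h Dh (proj1 Hh)). Qed.

Variables (c' d' : R).
Hypotheses (Hcd' : c' < d') (Vc' : V c') (Vd' : V d').

Let lo := Rmin (h c') (h d').
Let hi := Rmax (h c') (h d').

Let W_of_preimage x : lo <= x <= hi -> W x.
Proof. apply is_interval_segment; auto; [apply Hgh | apply Hgh]; auto. Qed.

Let V_of_image y : c' <= y <= d' -> V y.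
Proof. intro Hy. apply (HV c' y d'); tauto. Qed.

Let lo_lt_hi : lo < hi.
Proof.
  assert (h c' <> h d') by (intro E; apply h_injective in E; auto; lra).
  unfold lo, hi, Rmin, Rmax. destruct Rle_dec; lra.
Qed.

Let g_maps_to x : open_int lo hi x -> open_int c' d' (g x).
Proof.
  intros Hx. pose proof (g_between (h c') (h d') x) as Hb.
  rewrite (proj2 (Hgh c' Vc')), (proj2 (Hgh d' Vd')), (Rmin_left c'), (Rmax_right c') in Hb
    by lra.
  apply Hb; [apply Hgh | apply Hgh | exact Hx]; auto.
Qed.

Lemma inverse_maps_into_preimage y : open_int c' d' y -> open_int lo hi (h y).
Proof.
  intros [Hc Hd]. apply h_between; auto. rewrite Rmin_left, Rmax_right; lra.
Qed.

Lemma preimage_length_lt (L : R) : Rbar_lt (ilen W) L -> hi - lo < L.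
Proof.
  intro HL.
  assert (Hlen :=
    ilen_ge_diff W lo hi (W_of_preimage lo ltac:(lra)) (W_of_preimage hi ltac:(lra))).
  exact (Rbar_le_lt_trans _ _ _ Hlen HL).
Qed.

Lemma restriction_C2_diffeo : C2_diffeo (open_int lo hi) (open_int c' d') g Dg.
Proof.
  split.
  - apply (C2_with_subset W); auto. intros x [Hx1 Hx2]. apply W_of_preimage. lra.
  - exists h, Dh. split; [|split].
    + apply (C2_with_subset V); auto. intros y [Hy1 Hy2]. apply V_of_image. lra.
    + intros x Hx. split; [apply g_maps_to; auto|].
      apply Hhg, W_of_preimage. destruct Hx. lra.
    + intros y Hy. split; [apply inverse_maps_into_preimage; auto|].
      apply Hgh, V_of_image. destruct Hy. lra.
Qed.

Lemma restriction_extensible delta :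
  convex_on W (inv_sqrt_abs Dg) ->
  Rbar_le (delta * (d' - c')) (ilen (left_comp V c')) ->
  Rbar_le (delta * (d' - c')) (ilen (right_comp V d')) ->
  extensible delta lo hi c' d' g Dg.
Proof.
  intros Hconv Hleft Hright.
  split; [exact restriction_C2_diffeo | split].
  - apply (convex_on_subset W); auto. intros x [Hx1 Hx2]. apply W_of_preimage. lra.
  - exists W, V. split; [exact HW | split; [exact HV | split; [| split; [| auto]]]].
    + intros x Hx1 Hx2. apply W_of_preimage. lra.
    + split; [exact Hg | exists h, Dh; auto].
Qed.

Lemma restriction_Dg_same_sign x y :
  open_int lo hi x -> open_int lo hi y -> 0 < Dg x * Dg y.
Proof.
  destruct Hg as [HgD [D2g [HDg _]]].
  apply cont_neq0_same_sign.
  - apply open_int_is_interval.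
  - apply (cont_within_subset W); [intros t [Ht1 Ht2]; apply W_of_preimage; lra|].
    exact (deriv_within_cont W Dg D2g HDg).
  - intros t Ht.
    apply (is_derive_left_inverse_neq0 g h t (Dg t) (Dh (g t))).
    + apply (deriv_within_is_derive W g Dg lo hi); auto.
      intros s Hs. apply W_of_preimage. lra.
    + apply (deriv_within_is_derive V h Dh c' d'); [exact (proj1 Hh) | | apply g_maps_to; auto].
      intros s Hs. apply V_of_image. lra.
    + apply (locally_open (open_int lo hi)); auto.
      * apply open_and; [apply open_gt | apply open_lt].
      * intros s [Hs1 Hs2]. apply Hhg, W_of_preimage. lra.
Qed.

(* The margins cm < c' and d' < dp make the endpoints of the preimage interior points
   of W, where MVT_cor2 needs g to be differentiable. *)
Lemma restriction_mvt cm dp : V cm -> V dp -> cm < c' -> d' < dp ->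
  exists xi, open_int lo hi xi /\ Rabs (Dg xi) * (hi - lo) = d' - c'.
Proof.
  intros Vcm Vdp Hcm Hdp.
  set (al := Rmin (h cm) (h dp)). set (be := Rmax (h cm) (h dp)).
  assert (Hc'in : al < h c' < be) by (apply h_between; auto; rewrite Rmin_left, Rmax_right; lra).
  assert (Hd'in : al < h d' < be) by (apply h_between; auto; rewrite Rmin_left, Rmax_right; lra).
  assert (Hal : al < lo) by (apply Rmin_glb_lt; lra).
  assert (Hbe : hi < be) by (apply Rmax_lub_lt; lra).
  destruct (MVT_cor2 g Dg lo hi lo_lt_hi) as [xi [Hxi Hxi_in]].
  { intros t Ht. apply is_derive_Reals.
    apply (deriv_within_is_derive W g Dg al be t (proj1 Hg)); [|lra].
    intros s Hs. apply (is_interval_segment W (h cm) (h dp)); auto;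
      [apply Hgh; auto.. | fold al be; lra]. }
  exists xi. split; [exact Hxi_in|].
  assert (Hgap : Rabs (g hi - g lo) = d' - c').
  { unfold lo, hi, Rmin, Rmax. destruct Rle_dec;
      rewrite (proj2 (Hgh c' Vc')), (proj2 (Hgh d' Vd')); unfold Rabs; destruct Rcase_abs; lra. }
  rewrite Hxi, Rabs_mult, (Rabs_pos_eq (hi - lo)) in Hgap by lra. exact Hgap.
Qed.

End Restriction.

Theorem mainTheorem4 (Delta : R) (HDelta : 1 < Delta)
  (Hbound : forall (a' b' c' d' : R) (g' Dg' : R -> R),
      a' < b' -> c' < d' -> extensible Delta a' b' c' d' g' Dg' ->
      forall x y, open_int a' b' x -> open_int a' b' y -> Dg' x / Dg' y <= 2)
  (a b c d : R) (g Dg : R -> R) (What Vhat : R -> Prop)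
  (Hab : a < b) (Hcd : c < d)
  (Hg : C2_diffeo (open_int a b) (open_int c d) g Dg)
  (Hconv : convex_on (open_int a b) (inv_sqrt_abs Dg))
  (HWi : is_interval What) (HVi : is_interval Vhat)
  (Hcpt : compactly_contains_int What a b)
  (Hgext : C2_diffeo What Vhat g Dg)
  (Hconvext : convex_on What (inv_sqrt_abs Dg))
  (Hleft : Rbar_le (10 * (1 + Delta) * (d - c)) (ilen (left_comp Vhat c)))
  (Hright : Rbar_le (10 * (1 + Delta) * (d - c)) (ilen (right_comp Vhat d)))
  (Hlen : Rbar_lt (ilen What) (d - c)) :
  forall x, open_int a b x -> 5 < Rabs (Dg x).
Proof.
  intros x0 Hx0.
  destruct Hgext as [HgC2 [h [Dh [HhC2 [Hhg Hgh]]]]].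
  set (w := d - c). assert (Hw : 0 < w) by (unfold w; lra).
  destruct (left_comp_far_point _ _ _ w Hleft Hw) as [z1 [Vz1 Hz1]].
  destruct (right_comp_far_point _ _ _ w Hright Hw) as [z2 [Vz2 Hz2]].
  assert (Vin : forall y, c - 5 * w <= y <= d + 5 * w -> Vhat y)
    by (intros y Hy; apply (HVi z1 y z2); auto; unfold w in *; nra).
  set (c' := c - 9/2 * w). set (d' := d + 9/2 * w).
  assert (Hcd' : c' < d') by (unfold c', d'; lra).
  assert (Vc' : Vhat c') by (apply Vin; unfold c', d'; lra).
  assert (Vd' : Vhat d') by (apply Vin; unfold c', d'; lra).
  assert (Hext : extensible Delta (Rmin (h c') (h d')) (Rmax (h c') (h d')) c' d' g Dg).
  { apply (restriction_extensible What Vhat g Dg h Dh); auto.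
    - apply Rbar_le_trans with (c' - z1); [simpl; unfold c', d', w in *; nra |].
      apply ilen_ge_diff; split; auto; unfold c', w in *; nra.
    - apply Rbar_le_trans with (z2 - d'); [simpl; unfold c', d', w in *; nra |].
      apply ilen_ge_diff; split; auto; unfold d', w in *; nra. }
  destruct (restriction_mvt What Vhat g Dg h Dh HWi HVi HgC2 HhC2 Hgh c' d' Hcd' Vc' Vd'
              (c - 5 * w) (d + 5 * w)) as [xi [Hxi Hslope]];
    [apply Vin; lra | apply Vin; lra | unfold c'; lra | unfold d'; lra |].
  assert (Hx0' : open_int (Rmin (h c') (h d')) (Rmax (h c') (h d')) x0).
  { destruct Hg as [_ [h0 [Dh0 [_ [Hg0 _]]]]]. destruct (Hg0 x0 Hx0) as [[Hgx1 Hgx2] _].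
    rewrite <- (proj2 (Hhg x0 (Hcpt x0 (Rlt_le _ _ (proj1 Hx0)) (Rlt_le _ _ (proj2 Hx0))))).
    apply (inverse_maps_into_preimage What Vhat g h Dh); auto. unfold c', d'; split; lra. }
  assert (Hratio := Hbound _ _ _ _ g Dg (Rlt_trans _ _ _ (proj1 Hxi) (proj2 Hxi)) Hcd' Hext
                      xi x0 Hxi Hx0').
  assert (Hsign := restriction_Dg_same_sign What Vhat g Dg h Dh HWi HVi HgC2 HhC2 Hhg Hgh
                     c' d' Hcd' Vc' Vd' xi x0 Hxi Hx0').
  assert (Hshort := preimage_length_lt What Vhat g h HWi Hgh c' d' Hcd' Vc' Vd' w Hlen).
  assert (Habs := Rabs_le_of_ratio_le _ _ _ Hsign Hratio).
  destruct Hxi. unfold c', d', w in *. nra.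
Qed.
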